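(* Let $N$ be a positive integer, $R\in\{0,\dots,N\}$, $n\in\{1,\dots,N\}$, and $r\in\{0,\dots,n\}$ with $R+n-N\le r\le R$. Let $\mathscr{A}=\{\vartheta\in\mathbb{Z}^+:r\le\vartheta\le R\}$, $\mathscr{B}=\{\vartheta\in\mathbb{Z}^+:R\le\vartheta\le r+N-n\}$, and $\widehat R=\min\{N,\lfloor(N+1)\frac rn\rfloor\}$. Then $\widehat R\in\mathscr{A}$ provided $\frac rn\le\frac RN$, and $\widehat R\in\mathscr{B}$ provided $\frac rn\ge\frac RN$.
   Context: $\mathbb{Z}^+$ denotes the set of nonnegative integers. *)

From mathcomp Require Import all_boot.
Definition Rhat (N n r : nat) : nat := minn N (((N + 1) * r) %/ n).
Definition setA (r R : nat) (t : nat) : Prop := r <= t <= R.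
Definition setB (N n r R : nat) (t : nat) : Prop := R <= t /\ (t + n <= r + N)%N.

From mathcomp Require Import all_boot.
From mathcomp Require Import zify.

(* Rhat is a floor quotient capped at N, so k <= Rhat < k' as soon as k <= N and
   k * n <= (N + 1) r < k' * n.  For the upper bound of B the gap is
   (r + N - n + 1) n - (N + 1) r = (n - r)(N - n + 1), positive unless r = n,
   in which case the cap N already suffices; likewise for the upper bound of A. *)

Lemma ltn_shift_mul r n N : r < n <= N -> (N + 1) * r < (r + N - n + 1) * n.
Proof.
case/andP=> rn nN.
have [d n_eq] : exists d, n = r + d.+1 by exists (n - r).-1; lia.
have [e N_eq] : exists e, N = n + e by exists (N - n); lia.
rewrite N_eq addnCA addKn n_eq.
nia.
Qed.

Section Rhat_bounds.

Variables (N n r : nat).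
Hypothesis n_gt0 : 0 < n.

Lemma Rhat_leN : Rhat N n r <= N.
Proof. exact: geq_minl. Qed.

Lemma leq_Rhat k : k <= N -> k * n <= (N + 1) * r -> k <= Rhat N n r.
Proof. by move=> kN kn; rewrite leq_min kN leq_divRL. Qed.

Lemma Rhat_ltn k : (N + 1) * r < k * n -> Rhat N n r < k.
Proof. by move=> kn; rewrite gtn_min ltn_divLR // kn orbT. Qed.

Lemma Rhat_ge_num : r <= n <= N -> r <= Rhat N n r.
Proof.
case/andP=> rn nN; apply: leq_Rhat; first exact: leq_trans nN.
by rewrite [_ * r]mulnC leq_mul // (leq_trans nN) ?leq_addr.
Qed.

Lemma Rhat_ge_ratio R : R <= N -> R * n <= r * N -> R <= Rhat N n r.
Proof.
move=> RN Rn; apply: leq_Rhat => //; apply: (leq_trans Rn).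
by rewrite [_ * r]mulnC leq_mul ?leq_addr.
Qed.

Lemma Rhat_le_ratio R : R <= N -> r <= n -> r * N <= R * n -> Rhat N n r <= R.
Proof.
move=> RN rn rN; have [r_lt_n | n_le_r] := ltnP r n.
  suff : Rhat N n r < R + 1 by rewrite addn1 ltnS.
  apply: Rhat_ltn; rewrite !mulnDl !mul1n [N * r]mulnC.
  by rewrite -addnS leq_add.
have r_eq_n : r = n by apply/eqP; rewrite eqn_leq rn.
have R_eq_N : R = N.
  by apply/eqP; rewrite eqn_leq RN -(leq_pmul2r n_gt0) mulnC -{1}r_eq_n.
by rewrite R_eq_N Rhat_leN.
Qed.

Lemma Rhat_add_le : r <= n <= N -> Rhat N n r + n <= r + N.
Proof.
case/andP=> rn nN; have [r_lt_n | n_le_r] := ltnP r n.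
  have : Rhat N n r < r + N - n + 1.
    by apply: Rhat_ltn; apply: ltn_shift_mul; rewrite r_lt_n.
  lia.
by have := Rhat_leN; lia.
Qed.

End Rhat_bounds.

Theorem lemma7 (N R n r : nat) :
  0 < N -> R <= N -> 1 <= n <= N -> r <= n -> R + n <= r + N -> r <= R ->
  (r * N <= R * n -> setA r R (Rhat N n r)) /\
  (R * n <= r * N -> setB N n r R (Rhat N n r)).
Proof.
move=> _ RN /andP[n_gt0 nN] rn _ _; have rnN : r <= n <= N by rewrite rn.
split=> ratio.
  by rewrite /setA Rhat_ge_num // Rhat_le_ratio.
by split; [exact: Rhat_ge_ratio | exact: Rhat_add_le].
Qed.
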